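(* Let $m,n\geq 0$ be integers. Then \[ \sum_{k=1}^{n}\frac{(q/z;q)_{k}(z;q)_{n-k}(z;q)_m}{(q;q)_k (q;q)_{n-k}(q^k;q)_{m+1}}q^{mk}z^k -\sum_{k=1}^{m}\frac{(q/z;q)_{k}(z;q)_{m-k}(z;q)_n}{(q;q)_k (q;q)_{m-k}(q^k;q)_{n+1}}q^{nk}z^k \] \[ =\frac{(1-zq^{-1})(z;q)_m(z;q)_n}{(q;q)_{m}(q;q)_{n}}\left(\sum_{k=1}^m\frac{q^k}{(1-zq^{k-1})(1-q^k)}-\sum_{k=1}^n\frac{q^k}{(1-zq^{k-1})(1-q^k)}\right). \]
   Context: For $N\geq 0$, $(x;q)_N=(1-x)(1-xq)\cdots(1-xq^{N-1})$ (with $(x;q)_0=1$). The identity is one of rational functions in $q$ and $z$. *)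

From HB Require Import structures.
From mathcomp Require Import all_boot all_order all_algebra.
Set Implicit Arguments. Unset Strict Implicit. Unset Printing Implicit Defensive.
Import GRing.Theory.
Local Open Scope ring_scope.

Definition qpoch (R : pzRingType) (x q : R) (N : nat) : R :=
  \prod_(i < N) (1 - x * q ^+ i).

Definition QQqz := {fraction {poly {poly rat}}}.

Definition qv : QQqz := tofrac ('X : {poly {poly rat}}).
Definition zv : QQqz := tofrac (('X : {poly rat})%:P : {poly {poly rat}}).

From HB Require Import structures.
From mathcomp Require Import all_boot all_order all_algebra.
From mathcomp Require Import ring.
Import GRing.Theory.
Local Open Scope ring_scope.

(* With c(n,m) = (z;q)_n (z;q)_m / ((q;q)_n (q;q)_m), the k-th term of the
   first sum is c(n,m) w_n(k) Phi_m(q^k), where Phi_m(x) = (q;q)_m x^m / (x;q)_(m+1)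
   and w_n(i) = coefPsi n i are the coefficients of the partial fractions
     Psi_n(y) = (q;q)_n (zy;q)_n / ((z;q)_n (y;q)_(n+1)) = sum_i w_n(i) / (1 - y q^i);
   likewise Phi_m(x) = sum_j r_m(j) / (1 - x q^j), with r_m(j) = coefPhi m j and
   r_m(0) = 1.  Separating the pole j = 0 writes the left-hand side as
   c(n,m) (Z(n,m) - Z(m,n) + S(n) - S(m)), where
     Z(n,m) = ZPhi n m = sum_(k>=1) w_n(k) (Phi_m(q^k) - 1/(1 - q^k)),
     S(n) = sum_(k>=1) w_n(k) / (1 - q^k);
   an induction on n evaluates S(n) as -(1 - z/q) times the sum on the right.
   It remains to see that Z is symmetric.  Expanding both Phi_m and Psi_n,
     Z(n,m) = sum_(k,j>=1) w_n(k) r_m(j) / (1 - q^(k+j))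
            = sum_(j>=1) r_m(j) (Psi_n(q^j) - 1/(1 - q^j)),
   and the latter equals Z(m,n) by induction on n: the increments in n of both
   sides obey one and the same first order recurrence in m. *)

Section QPochRing.
Variables (R : pzRingType) (q : R).
Local Notation P x N := (qpoch x q N).

Lemma qpoch0 x : P x 0 = 1.
Proof. by rewrite /qpoch big_ord0. Qed.

Lemma qpochS x N : P x N.+1 = P x N * (1 - x * q ^+ N).
Proof. by rewrite /qpoch big_ord_recr. Qed.

Lemma qpochSl x N : P x N.+1 = (1 - x) * P (x * q) N.
Proof.
rewrite /qpoch big_ord_recl /= expr0 mulr1; congr (_ * _).
by apply: eq_bigr => i _; rewrite /bump /= add1n exprS mulrA.
Qed.

Lemma qpochD x a b : P x (a + b)%N = P x a * P (x * q ^+ a) b.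
Proof.
elim: b => [|b IH]; first by rewrite addn0 qpoch0 mulr1.
by rewrite addnS !qpochS IH -!mulrA exprD mulrA.
Qed.

Lemma qpochDC x a b : P x a * P (x * q ^+ a) b = P x b * P (x * q ^+ b) a.
Proof. by rewrite -!qpochD addnC. Qed.

End QPochRing.

Section QPochField.
Variables (F : fieldType) (q : F).
Local Notation P x N := (qpoch x q N).

Lemma qpoch_neq0 x N : (forall i, (i < N)%N -> 1 - x * q ^+ i != 0) -> P x N != 0.
Proof. by move=> H; apply/prodf_neq0 => i _; apply: H. Qed.

Lemma qpoch_mulq x N : 1 - x != 0 -> P (x * q) N = P x N * (1 - x * q ^+ N) / (1 - x).
Proof. by move=> Hx; rewrite -qpochS qpochSl; field. Qed.

Lemma qpochX_swap x j N : P x j != 0 ->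
  P (x * q ^+ j) N = P x N * P (x * q ^+ N) j / P x j.
Proof. by move=> Hx; apply: (mulfI Hx); rewrite qpochDC; field. Qed.

Lemma qpoch_reflect N x : q != 0 -> x != 0 ->
  P (x / q ^+ N) N = (- x) ^+ N / q ^+ 'C(N.+1, 2) * P (q / x) N.
Proof.
move=> Hq; elim: N x => [|N IH] x Hx.
  by rewrite !qpoch0 expr0 (_ : 'C(1, 2) = 0%N) // expr0 divr1 mulr1.
have HqN : q ^+ N != 0 by apply: expf_neq0.
rewrite [LHS]qpochSl.
have -> : x / q ^+ N.+1 * q = x / q ^+ N by rewrite exprS; field; rewrite ?Hq ?HqN.
rewrite IH // qpochS (binS N.+1) bin1 exprD.
have -> : q / x * q ^+ N = q ^+ N.+1 / x by rewrite exprS; field.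
by rewrite !exprS; field; rewrite Hx Hq !expf_neq0.
Qed.

End QPochField.

Section GenericQZ.
Variables (F : fieldType) (q z : F).
(* Every denominator below is, up to a monomial factor, a difference of two
   distinct monomials q^a z^b, so this is all the genericity the proof needs. *)
Hypothesis monomial_inj :
  forall a b c d : nat, q ^+ a * z ^+ b = q ^+ c * z ^+ d -> a = c /\ b = d.
Local Notation P x N := (qpoch x q N).

Lemma monomialB_neq0 a b c d :
  (a != c) || (b != d) -> q ^+ a * z ^+ b - q ^+ c * z ^+ d != 0.
Proof.
by move=> H; rewrite subr_eq0; apply: (contraTneq _ H) => /monomial_inj[-> ->]; rewrite !eqxx.
Qed.

Lemma q_neq0 : q != 0.
Proof.
apply: (contraTneq _ (monomialB_neq0 1 0 2 0 isT)) => ->.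
by rewrite expr1 expr2 !mul0r subrr eqxx.
Qed.

Lemma z_neq0 : z != 0.
Proof.
apply: (contraTneq _ (monomialB_neq0 0 1 0 2 isT)) => ->.
by rewrite expr1 expr2 !mulr0 subrr eqxx.
Qed.

Lemma expq_neq0 k : q ^+ k != 0. Proof. exact: expf_neq0 q_neq0. Qed.

Lemma onemqX_neq0 k : (0 < k)%N -> 1 - q ^+ k != 0.
Proof.
by move=> Hk; have := monomialB_neq0 0 0 k 0; rewrite !expr0 !mulr1; apply; rewrite eq_sym -lt0n Hk.
Qed.

Lemma onemzqX_neq0 k : 1 - z * q ^+ k != 0.
Proof. by have := monomialB_neq0 0 0 k 1 (orbT _); rewrite !expr0 !mulr1 expr1 mulrC. Qed.

Lemma onemz_neq0 : 1 - z != 0.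
Proof. by have := onemzqX_neq0 0; rewrite expr0 mulr1. Qed.

Lemma onemqzqX_neq0 k : 1 - q / z * q ^+ k != 0.
Proof.
have -> : 1 - q / z * q ^+ k = (q ^+ 0 * z ^+ 1 - q ^+ k.+1 * z ^+ 0) / z.
  by rewrite expr1 exprS !expr0; field; apply: z_neq0.
by rewrite mulf_neq0 ?invr_eq0 ?z_neq0 ?monomialB_neq0.
Qed.

Lemma onemqXV_neq0 k l : k != l -> 1 - q ^+ k / q ^+ l != 0.
Proof.
move=> Hkl; have -> : 1 - q ^+ k / q ^+ l = (q ^+ l * z ^+ 0 - q ^+ k * z ^+ 0) / q ^+ l.
  by rewrite expr0 !mulr1; field; apply: expq_neq0.
by rewrite mulf_neq0 ?invr_eq0 ?expq_neq0 // monomialB_neq0 // eq_sym Hkl.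
Qed.

Lemma onemzqXV_neq0 k l : 1 - z * q ^+ k / q ^+ l != 0.
Proof.
have -> : 1 - z * q ^+ k / q ^+ l = (q ^+ l * z ^+ 0 - q ^+ k * z ^+ 1) / q ^+ l.
  by rewrite expr0 expr1 !mulr1; field; apply: expq_neq0.
by rewrite mulf_neq0 ?invr_eq0 ?expq_neq0 // monomialB_neq0 // orbT.
Qed.

Lemma qpochq_neq0 N : P q N != 0.
Proof. by apply: qpoch_neq0 => i _; rewrite -exprS onemqX_neq0. Qed.

Lemma qpochz_neq0 N : P z N != 0.
Proof. by apply: qpoch_neq0 => i _; apply: onemzqX_neq0. Qed.

Lemma qpochqz_neq0 N : P (q / z) N != 0.
Proof. by apply: qpoch_neq0 => i _; apply: onemqzqX_neq0. Qed.

Lemma qpochqX_neq0 k N : (0 < k)%N -> P (q ^+ k) N != 0.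
Proof. by move=> Hk; apply: qpoch_neq0 => i _; rewrite -exprD onemqX_neq0 // addn_gt0 Hk. Qed.

Lemma qpochzqX_neq0 k N : P (z * q ^+ k) N != 0.
Proof. by apply: qpoch_neq0 => i _; rewrite -mulrA -exprD onemzqX_neq0. Qed.

Ltac neq0_atom := first
  [ exact: q_neq0 | exact: z_neq0 | exact: expq_neq0 | exact: (expf_neq0 _ z_neq0)
  | by rewrite signr_eq0 | exact: oner_neq0 | assumption
  | exact: qpochq_neq0 | exact: qpochz_neq0 | exact: qpochqz_neq0 | exact: qpochzqX_neq0
  | exact: onemzqX_neq0 | exact: onemqzqX_neq0 | exact: onemzqXV_neq0 | exact: onemz_neq0
  | by apply: onemqX_neq0 | by rewrite -exprS onemqX_neq0 | by apply: onemqXV_neq0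
  | by apply: qpochqX_neq0 | by rewrite -!exprS qpochqX_neq0
  | (rewrite -?mulrA -?exprD -?exprS -?exprD -?exprS;
     first [by apply: onemqX_neq0 | exact: onemzqX_neq0])
  | by rewrite -oppr_eq0 opprB onemqX_neq0 | by rewrite -oppr_eq0 opprB -exprS onemqX_neq0
  | (rewrite -exprD; neq0_atom) | by rewrite oppr_eq0 oner_eq0
  | (apply: mulf_neq0; neq0_atom) | (rewrite invr_eq0; neq0_atom)
  | (apply: expf_neq0; neq0_atom) ].
Ltac neq0 := repeat (apply/andP; split); neq0_atom.

Definition coefPsi n i :=
  P (q / z) i * P z (n - i) * z ^+ i * P q n / (P q i * P q (n - i) * P z n).
Definition Psi n y := P q n * P (z * y) n / (P z n * P y n.+1).

Lemma coefPsi0 n : coefPsi n 0 = 1.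
Proof. by rewrite /coefPsi subn0 !qpoch0 expr0 !mul1r; field; neq0. Qed.

Lemma coefPsiS n i : (i <= n)%N ->
  coefPsi n.+1 i = coefPsi n i * ((1 - q ^+ n.+1) * (1 - z * q ^+ (n - i)))
                   / ((1 - q ^+ (n - i).+1) * (1 - z * q ^+ n)).
Proof.
move=> Hi; rewrite /coefPsi subSn // !qpochS; move: (n - i)%N => k.
by rewrite !exprS; field; neq0.
Qed.

(* Drives the induction on n in the partial fraction expansion: each new
   coefficient splits between the old pole in y and the new pole q^-(n+1). *)
Lemma coefPsiS_frac n i y : (i <= n)%N -> 1 - y * q ^+ i != 0 -> 1 - y * q ^+ n.+1 != 0 ->
  coefPsi n.+1 i / (1 - y * q ^+ i) =
  coefPsi n i * ((1 - q ^+ n.+1) * (1 - z * y * q ^+ n)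
                  / ((1 - z * q ^+ n) * (1 - y * q ^+ n.+1)) / (1 - y * q ^+ i)
           - (1 - q ^+ n.+1) * (q ^+ n.+1 - z * q ^+ n)
                  / ((1 - z * q ^+ n) * (1 - y * q ^+ n.+1) * q ^+ n.+1)
                  / (1 - (q ^+ n.+1)^-1 * q ^+ i)).
Proof.
move=> Hi Hy1 Hy2; rewrite coefPsiS //.
have Hn : q ^+ n = q ^+ (n - i) * q ^+ i by rewrite -exprD subnK.
have -> : 1 - (q ^+ n.+1)^-1 * q ^+ i = (q ^+ (n - i) * q - 1) / (q ^+ (n - i) * q).
  by rewrite exprS Hn; field; neq0.
have H1 : q ^+ (n - i) * q - 1 != 0 by rewrite -exprSr -oppr_eq0 opprB onemqX_neq0.
move: Hy2; rewrite !exprS Hn.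
by move: (n - i)%N (coefPsi n i) H1 => k w H1 Hy2; field; neq0.
Qed.

Lemma Psi_qXV n :
  Psi n (q ^+ n.+1)^-1 = - z ^+ n * q * P (q / z * q) n / (P z n * (1 - q ^+ n.+1)).
Proof.
rewrite /Psi.
have -> : z * (q ^+ n.+1)^-1 = (z / q) / q ^+ n by rewrite exprS; field; neq0.
have -> : (q ^+ n.+1)^-1 = 1 / q ^+ n.+1 by rewrite div1r.
have Hzq : z / q != 0 by rewrite mulf_neq0 ?invr_eq0 ?z_neq0 ?q_neq0.
rewrite (qpoch_reflect F q n (z / q) q_neq0 Hzq)
  (qpoch_reflect F q n.+1 1 q_neq0 (oner_neq0 F)).
have -> : q / (z / q) = q / z * q by field; neq0.
rewrite divr1 qpochS (binS n.+1) bin1 exprD exprNn expr_div_n.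
by rewrite !exprS; field; neq0.
Qed.

Lemma Psi_recr n y : (forall k, (k <= n.+1)%N -> 1 - y * q ^+ k != 0) ->
  (1 - q ^+ n.+1) * (1 - z * y * q ^+ n) / ((1 - z * q ^+ n) * (1 - y * q ^+ n.+1)) * Psi n y
  - (1 - q ^+ n.+1) * (q ^+ n.+1 - z * q ^+ n)
      / ((1 - z * q ^+ n) * (1 - y * q ^+ n.+1) * q ^+ n.+1) * Psi n (q ^+ n.+1)^-1
  + coefPsi n.+1 n.+1 / (1 - y * q ^+ n.+1) = Psi n.+1 y.
Proof.
move=> Hy; rewrite Psi_qXV /Psi /coefPsi subnn !qpoch0 [P (q / z) n.+1]qpochSl !qpochS.
have Hy0 : 1 - y * q ^+ n != 0 by apply: Hy; rewrite leqnSn.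
have HPy : P y n != 0 by apply: qpoch_neq0 => i Hi; apply: Hy; rewrite ltnW // ltnW.
have Hyn : 1 - y * (q * q ^+ n) != 0 by rewrite -exprS; apply: Hy.
by rewrite !exprS; field; neq0.
Qed.

Lemma Psi_partial_fraction n y : (forall k, (k <= n)%N -> 1 - y * q ^+ k != 0) ->
  \sum_(i < n.+1) coefPsi n i / (1 - y * q ^+ i) = Psi n y.
Proof.
elim: n y => [|n IH] y Hy.
  have := Hy 0%N isT; rewrite expr0 mulr1 => Hy0.
  by rewrite big_ord1 coefPsi0 /Psi !qpoch0 qpochS qpoch0 expr0 mulr1; field; neq0.
have HyV k : (k <= n)%N -> 1 - (q ^+ n.+1)^-1 * q ^+ k != 0.
  by move=> Hk; rewrite mulrC onemqXV_neq0 // neq_ltn ltnS Hk.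
rewrite big_ord_recr /= -Psi_recr // -IH; last by move=> k Hk; apply: Hy; rewrite ltnW.
rewrite -IH //; congr (_ + _); rewrite !mulr_sumr -sumrB; apply: eq_bigr => i _.
rewrite coefPsiS_frac; first by ring.
- by rewrite -ltnS ltn_ord.
- by apply: Hy; apply/ltnW/ltn_ord.
- by apply: Hy.
Qed.

Definition coefPhi m j :=
  (-1) ^+ j * q ^+ 'C(j.+1, 2) / q ^+ (j * m) * (P q m / (P q j * P q (m - j))).
Definition Phi m x := P q m * x ^+ m / P x m.+1.

Lemma coefPhi0 m : coefPhi m 0 = 1.
Proof. by rewrite /coefPhi subn0 (_ : 'C(1, 2) = 0%N) // mul0n !expr0 qpoch0; field; neq0. Qed.

Lemma coefPhiS m j : (j <= m)%N ->
  coefPhi m.+1 j = coefPhi m j * (1 - q ^+ m.+1) / (q ^+ j - q ^+ m.+1).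
Proof.
move=> Hj; rewrite /coefPhi subSn // [P q m.+1]qpochS qpochS mulnS exprD.
have Hm : q ^+ m = q ^+ (m - j) * q ^+ j by rewrite -exprD subnK.
rewrite !exprS Hm.
have H1 : q ^+ j - q * (q ^+ (m - j) * q ^+ j) != 0.
  have -> : q ^+ j - q * (q ^+ (m - j) * q ^+ j) = q ^+ j * (1 - q ^+ (m - j).+1).
    by rewrite exprS; ring.
  by apply: mulf_neq0; neq0.
by move: (m - j)%N H1 => k H1; field; neq0.
Qed.

Lemma coefPhiS_frac m j x : (j <= m)%N -> 1 - x * q ^+ j != 0 -> 1 - x * q ^+ m.+1 != 0 ->
  coefPhi m.+1 j / (1 - x * q ^+ j) =
  coefPhi m j * ((1 - q ^+ m.+1) * x / (1 - q ^+ m.+1 * x) / (1 - x * q ^+ j)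
           - (1 - q ^+ m.+1) / ((1 - x * q ^+ m.+1) * q ^+ m.+1)
               / (1 - (q ^+ m.+1)^-1 * q ^+ j)).
Proof.
move=> Hj Hx1 Hx2; rewrite coefPhiS //.
have H1 : q ^+ j - q ^+ m.+1 != 0.
  have -> : q ^+ m.+1 = q ^+ (m - j).+1 * q ^+ j by rewrite -exprD addSn subnK.
  by rewrite -{1}(mul1r (q ^+ j)) -mulrBl; apply: mulf_neq0; neq0.
have -> : 1 - (q ^+ m.+1)^-1 * q ^+ j = (q ^+ m.+1 - q ^+ j) / q ^+ m.+1.
  by field; neq0.
have H2 : q ^+ m.+1 - q ^+ j != 0 by rewrite -oppr_eq0 opprB.
have H3 : 1 - q ^+ m.+1 * x != 0 by rewrite mulrC.
have H4 := expq_neq0 m.+1.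
move: (q ^+ m.+1) (q ^+ j) (coefPhi m j) H1 H2 H3 H4 Hx1 Hx2.
by move=> c u r H1 H2 H3 H4 Hx1 Hx2; field; neq0.
Qed.

Lemma Phi_qXV m : Phi m (q ^+ m.+1)^-1
  = (-1) ^+ m.+1 * q ^+ 'C(m.+2, 2) / (q ^+ (m.+1 * m) * (1 - q ^+ m.+1)).
Proof.
rewrite /Phi.
have -> : (q ^+ m.+1)^-1 = 1 / q ^+ m.+1 by rewrite div1r.
rewrite (qpoch_reflect F q m.+1 1 q_neq0 (oner_neq0 F)) divr1 expr_div_n expr1n.
rewrite -exprM qpochS -exprS.
by rewrite -signr_odd; case: (odd m.+1); rewrite ?expr0 ?expr1; field; neq0.
Qed.

Lemma Phi_recr m x : (forall k, (k <= m.+1)%N -> 1 - x * q ^+ k != 0) ->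
  (1 - q ^+ m.+1) * x / (1 - q ^+ m.+1 * x) * Phi m x
  - (1 - q ^+ m.+1) / ((1 - x * q ^+ m.+1) * q ^+ m.+1) * Phi m (q ^+ m.+1)^-1
  + coefPhi m.+1 m.+1 / (1 - x * q ^+ m.+1) = Phi m.+1 x.
Proof.
move=> Hx; rewrite Phi_qXV /Phi /coefPhi subnn qpoch0 !qpochS.
rewrite [(m.+1 * m.+1)%N]mulnS exprD !exprS.
have Hx0 : 1 - x * q ^+ m != 0 by apply: Hx; rewrite leqnSn.
have HPx : P x m != 0 by apply: qpoch_neq0 => i Hi; apply: Hx; rewrite ltnW // ltnW.
have Hxn : 1 - x * (q * q ^+ m) != 0 by rewrite -exprS; apply: Hx.
have Hxn' : 1 - q * q ^+ m * x != 0 by rewrite mulrC.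
by rewrite -signr_odd; case: (odd m); rewrite ?expr0 ?expr1; field; neq0.
Qed.

Lemma Phi_partial_fraction m x : (forall k, (k <= m)%N -> 1 - x * q ^+ k != 0) ->
  \sum_(j < m.+1) coefPhi m j / (1 - x * q ^+ j) = Phi m x.
Proof.
elim: m x => [|m IH] x Hx.
  have := Hx 0%N isT; rewrite expr0 mulr1 => Hx0.
  by rewrite big_ord1 coefPhi0 /Phi !qpoch0 qpochS qpoch0 !expr0 mulr1; field; neq0.
have HxV k : (k <= m)%N -> 1 - (q ^+ m.+1)^-1 * q ^+ k != 0.
  by move=> Hk; rewrite mulrC onemqXV_neq0 // neq_ltn ltnS Hk.
rewrite big_ord_recr /= -Phi_recr // -IH; last by move=> k Hk; apply: Hx; rewrite ltnW.
rewrite -IH //; congr (_ + _); rewrite !mulr_sumr -sumrB; apply: eq_bigr => j _.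
rewrite coefPhiS_frac; first by ring.
- by rewrite -ltnS ltn_ord.
- by apply: Hx; apply/ltnW/ltn_ord.
- by apply: Hx.
Qed.

Lemma Psi_sub1 n y : (forall k, (k <= n)%N -> 1 - y * q ^+ k != 0) ->
  Psi n y - 1 / (1 - y) = \sum_(1 <= k < n.+1) coefPsi n k / (1 - y * q ^+ k).
Proof.
move=> Hy; rewrite -Psi_partial_fraction //.
rewrite -(big_mkord xpredT (fun i => coefPsi n i / (1 - y * q ^+ i))) big_ltn //.
by rewrite coefPsi0 expr0 mulr1 addrC addKr.
Qed.

Lemma Phi_sub1 m x : (forall k, (k <= m)%N -> 1 - x * q ^+ k != 0) ->
  Phi m x - 1 / (1 - x) = \sum_(1 <= j < m.+1) coefPhi m j / (1 - x * q ^+ j).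
Proof.
move=> Hx; rewrite -Phi_partial_fraction //.
rewrite -(big_mkord xpredT (fun j => coefPhi m j / (1 - x * q ^+ j))) big_ltn //.
by rewrite coefPhi0 expr0 mulr1 addrC addKr.
Qed.

Definition hsum n := \sum_(1 <= k < n.+1) q ^+ k / ((1 - z * q ^+ k.-1) * (1 - q ^+ k)).

Lemma sum_coefPsi_div n :
  \sum_(1 <= k < n.+1) coefPsi n k / (1 - q ^+ k) = - (1 - z * q^-1) * hsum n.
Proof.
elim: n => [|n IH]; first by rewrite /hsum !big_geq // mulr0.
have HyV k : (k <= n)%N -> 1 - (q ^+ n.+1)^-1 * q ^+ k != 0.
  by move=> Hk; rewrite mulrC onemqXV_neq0 // neq_ltn ltnS Hk.
have step : \sum_(1 <= k < n.+1) coefPsi n.+1 k / (1 - q ^+ k) =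
    \sum_(1 <= k < n.+1) coefPsi n k / (1 - q ^+ k)
    - (q - z) / (q * (1 - z * q ^+ n))
      * \sum_(1 <= k < n.+1) coefPsi n k / (1 - (q ^+ n.+1)^-1 * q ^+ k).
  rewrite mulr_sumr -sumrB; apply: eq_big_nat => k /andP[Hk1 Hkn].
  rewrite ltnS in Hkn.
  have Hk : q * q ^+ n - q ^+ k != 0.
    have := monomialB_neq0 n.+1 0 k 0; rewrite !expr0 !mulr1 exprS; apply.
    by rewrite neq_ltn ltnS Hkn orbT.
  have Hq1 : 1 - 1 * q ^+ k != 0 by rewrite mul1r onemqX_neq0.
  have Hqn : 1 - 1 * q ^+ n.+1 != 0 by rewrite mul1r onemqX_neq0.
  have := coefPsiS_frac n k 1 Hkn Hq1 Hqn; rewrite !mul1r mulr1 => ->.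
  by rewrite !exprS; field; neq0.
rewrite big_nat_recr //= step IH -Psi_sub1 // Psi_qXV [hsum n.+1]/hsum big_nat_recr //= -/(hsum n).
rewrite /coefPsi subnn !qpoch0 [P (q / z) n.+1]qpochSl !qpochS.
by rewrite !exprS; field; neq0.
Qed.

Lemma Psi_qX n j : (0 < j)%N ->
  Psi n (q ^+ j) = P (z * q ^+ n) j * P q j / (P z j * (1 - q ^+ j) * P (q * q ^+ n) j).
Proof.
move=> Hj; have HPqn : P (q * q ^+ n) j != 0 by rewrite -exprS qpochqX_neq0.
rewrite /Psi qpochSl (mulrC (q ^+ j) q) (qpochX_swap F q z j n (qpochz_neq0 j))
  (qpochX_swap F q q j n (qpochq_neq0 j)).
by field; neq0.
Qed.

Lemma Phi_qX n k : (0 < k)%N ->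
  Phi n (q ^+ k) = (q ^+ n) ^+ k * P q k / ((1 - q ^+ k) * P (q * q ^+ n) k).
Proof.
move=> Hk; have HPqn : P (q * q ^+ n) k != 0 by rewrite -exprS qpochqX_neq0.
rewrite /Phi qpochSl (mulrC (q ^+ k) q) (qpochX_swap F q q k n (qpochq_neq0 k)) exprAC.
by field; neq0.
Qed.

(* Rescaled increments in n of the j-th terms of ZPsi n m and ZPhi m n below. *)
Definition dPsi_term n m j :=
  (q - z) * q ^+ n / (1 - z * q ^+ n) * (-1) ^+ j * q ^+ 'C(j.+1, 2) / q ^+ (j * m)
  * (P z m / P q (m - j)) * (P (z * q ^+ n) j / (P z j * P (q * (q * q ^+ n)) j)).
Definition dPhi_term n m j :=
  P (q / z) j * z ^+ j * (q ^+ n) ^+ j / P (q * (q * q ^+ n)) j * (P z (m - j) / P q (m - j)).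

Lemma coefPhi_dPsi n m j : (0 < j)%N ->
  coefPhi m j * (Psi n.+1 (q ^+ j) - Psi n (q ^+ j))
  = - (P q m / P z m) / (1 - q * q ^+ n) * dPsi_term n m j.
Proof.
move=> Hj; rewrite !Psi_qX // /coefPhi /dPsi_term.
have -> : z * q ^+ n.+1 = z * q ^+ n * q by rewrite exprSr mulrA.
have -> : q * q ^+ n.+1 = q * q ^+ n * q by rewrite exprSr mulrA.
rewrite !qpoch_mulq; [|neq0|neq0].
have -> : q * (q * q ^+ n) = q * q ^+ n * q by rewrite mulrC.
rewrite qpoch_mulq; last neq0.
have HPqn : P (q * q ^+ n) j != 0 by rewrite -exprS qpochqX_neq0.
by field; neq0.
Qed.

Lemma coefPsi_dPhi n m k : (0 < k)%N ->
  coefPsi m k * (Phi n.+1 (q ^+ k) - Phi n (q ^+ k))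
  = - (P q m / P z m) / (1 - q * q ^+ n) * dPhi_term n m k.
Proof.
move=> Hk; rewrite !Phi_qX // /coefPsi /dPhi_term.
have -> : q * q ^+ n.+1 = q * q ^+ n * q by rewrite exprSr mulrA.
rewrite qpoch_mulq; last neq0.
have -> : q * (q * q ^+ n) = q * q ^+ n * q by rewrite mulrC.
rewrite qpoch_mulq; last neq0.
rewrite exprSr exprMn.
have HPqn : P (q * q ^+ n) k != 0 by rewrite -exprS qpochqX_neq0.
by field; neq0.
Qed.

Lemma dPhi_termS n m j : (1 <= j <= m)%N ->
  (1 - q ^+ m.+2 * q ^+ n) * dPhi_term n m.+1 j - z * q ^+ n * (1 - q ^+ m.+1) * dPhi_term n m j
  = - (1 - q ^+ j.+2 * q ^+ n) * dPhi_term n m.+1 j.+1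
    + (1 - q ^+ j.+1 * q ^+ n) * dPhi_term n m.+1 j.
Proof.
case/andP=> Hj1 Hjm; rewrite /dPhi_term subSS (subSn Hjm).
have Hm : q ^+ m = q ^+ j * q ^+ (m - j) by rewrite -exprD subnKC.
have HPX : P (q * (q * q ^+ n)) j != 0 by rewrite -!exprS qpochqX_neq0.
have H1 : 1 - q * (q * q ^+ n) * q ^+ j != 0 by rewrite -!exprS -exprD onemqX_neq0.
rewrite !qpochS !exprS Hm ?exprS.
move: (m - j)%N (P (q * (q * q ^+ n)) j) HPX H1 => k PX HPX H1.
by field; neq0.
Qed.

Lemma dPhi_sum_recr n m :
  (1 - q ^+ m.+2 * q ^+ n) * \sum_(1 <= j < m.+2) dPhi_term n m.+1 j
  - z * q ^+ n * (1 - q ^+ m.+1) * \sum_(1 <= j < m.+1) dPhi_term n m j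
  = q ^+ n * (z - q) * (P z m / P q m).
Proof.
set G := fun j => - (1 - q ^+ j.+1 * q ^+ n) * dPhi_term n m.+1 j.
have T : \sum_(1 <= j < m.+1) ((1 - q ^+ m.+2 * q ^+ n) * dPhi_term n m.+1 j
           - z * q ^+ n * (1 - q ^+ m.+1) * dPhi_term n m j) = G m.+1 - G 1%N.
  by apply: telescope_sumr_eq => // j Hj; rewrite dPhi_termS // /G /=; ring.
rewrite sumrB -!mulr_sumr in T.
rewrite big_nat_recr //= mulrDr addrAC T /G /dPhi_term !subnn subn1 /= !qpoch0 !expr1.
rewrite ![P _ 1]qpochS !qpoch0 !expr0 !mulr1 !mul1r expr2.
have H1 : 1 - q * (q * q ^+ n) != 0 by rewrite -!exprS onemqX_neq0.
by field; neq0.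
Qed.

Definition dPsi_prim n m j :=
  - (1 - q ^+ j.+1 * q ^+ n) * q ^+ (m.+1 - j) * (1 - z * q ^+ j.-1) / (1 - z * q ^+ m)
  * dPsi_term n m.+1 j.

Lemma dPsi_termS n m i : (i.+1 <= m)%N ->
  (1 - q ^+ m.+2 * q ^+ n) * dPsi_term n m.+1 i.+1
  - z * q ^+ n * (1 - q ^+ m.+1) * dPsi_term n m i.+1
  = dPsi_prim n m i.+2 - dPsi_prim n m i.+1.
Proof.
move=> Him; rewrite /dPsi_prim /dPsi_term (subSn Him) !subSS.
have -> : q ^+ (i.+1 * m.+1) = q ^+ (i.+1 * m) * q ^+ i.+1 by rewrite mulnS exprD mulrC.
have -> : q ^+ (i.+2 * m.+1) = q ^+ (i.+1 * m) * q ^+ i.+1 * q ^+ m.+1.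
  by rewrite mulSn mulnS !exprD mulrCA mulrA mulrC mulrA.
have -> : q ^+ 'C(i.+3, 2) = q ^+ 'C(i.+2, 2) * q ^+ i.+2 by rewrite (binS i.+2) bin1 exprD.
have Hm : q ^+ m = q ^+ i.+1 * q ^+ (m - i.+1) by rewrite -exprD subnKC.
have HPX : P (q * (q * q ^+ n)) i.+1 != 0 by rewrite -!exprS qpochqX_neq0.
have H1 : 1 - q * (q * q ^+ n) * q ^+ i.+1 != 0 by rewrite -!exprS -exprD onemqX_neq0.
have HPzX : P (z * q ^+ n) i.+1 != 0 by apply: qpochzqX_neq0.
have H2 : 1 - z * q ^+ n * q ^+ i.+1 != 0 by rewrite -mulrA -exprD onemzqX_neq0.
have H3 : 1 - z * q ^+ m != 0 by apply: onemzqX_neq0.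
have H4 : 1 - z * (q * (q ^+ i.+1 * q ^+ (m - i.+1))) != 0.
  by rewrite -exprD -exprS onemzqX_neq0.
have H5 : 1 - z * (q ^+ i.+1 * q ^+ (m - i.+1)) != 0 by rewrite -exprD onemzqX_neq0.
rewrite !qpochS !exprS Hm ?exprS.
rewrite !exprS in H1 H2 H4 H5.
move: (m - i.+1)%N (P (q * (q * q ^+ n)) i.+1) HPX H1 (P (z * q ^+ n) i.+1) HPzX H2 H3 H4 H5
  (q ^+ (i.+1 * m)) (expq_neq0 (i.+1 * m)) (q ^+ 'C(i.+2, 2)) (expq_neq0 'C(i.+2, 2)).
move=> k PX HPX H1 PzX HPzX H2 H3 H4 H5 E HE C HC.
by field; neq0.
Qed.

Lemma dPsi_sum_recr n m :
  (1 - q ^+ m.+2 * q ^+ n) * \sum_(1 <= j < m.+2) dPsi_term n m.+1 j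
  - z * q ^+ n * (1 - q ^+ m.+1) * \sum_(1 <= j < m.+1) dPsi_term n m j
  = q ^+ n * (z - q) * (P z m / P q m).
Proof.
have T : \sum_(1 <= j < m.+1) ((1 - q ^+ m.+2 * q ^+ n) * dPsi_term n m.+1 j
           - z * q ^+ n * (1 - q ^+ m.+1) * dPsi_term n m j) = dPsi_prim n m m.+1 - dPsi_prim n m 1.
  by apply: telescope_sumr_eq => // -[|i] /andP[Hi1 Hi2] //; rewrite dPsi_termS.
rewrite sumrB -!mulr_sumr in T.
rewrite big_nat_recr //= mulrDr addrAC T /dPsi_prim subnn subn1 /= expr0 !mulr1.
rewrite [dPsi_term n m.+1 1]/dPsi_term subn1 binn !mul1n expr1 ![P _ 1]qpochS !qpoch0.
rewrite !expr0 !mulr1 !mul1r [P z m.+1]qpochS.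
have H1 : 1 - q * (q * q ^+ n) != 0 by rewrite -!exprS onemqX_neq0.
by rewrite !exprS; field; neq0.
Qed.

(* Both sums obey the same first order recurrence in m and vanish for m = 0. *)
Lemma sum_dPsi_term n m :
  \sum_(1 <= j < m.+1) dPsi_term n m j = \sum_(1 <= j < m.+1) dPhi_term n m j.
Proof.
elim: m => [|m IH]; first by rewrite !big_geq.
have Hc : 1 - q ^+ m.+2 * q ^+ n != 0 by rewrite -exprD onemqX_neq0.
apply: (mulfI Hc); apply: (addIr (- (z * q ^+ n * (1 - q ^+ m.+1)
                                       * \sum_(1 <= j < m.+1) dPhi_term n m j))).
by rewrite dPhi_sum_recr -IH dPsi_sum_recr.
Qed.

Definition ZPsi n m :=
  \sum_(1 <= j < m.+1) coefPhi m j * (Psi n (q ^+ j) - 1 / (1 - q ^+ j)).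
Definition ZPhi m n :=
  \sum_(1 <= k < m.+1) coefPsi m k * (Phi n (q ^+ k) - 1 / (1 - q ^+ k)).

Lemma ZPsi_ZPhi n m : ZPsi n m = ZPhi m n.
Proof.
elim: n => [|n IH].
  rewrite /ZPsi /ZPhi !big1_seq // => j _.
  - by rewrite /Phi !qpoch0 qpochS qpoch0 !expr0 !mul1r mulr1 subrr mulr0.
  - by rewrite /Psi !qpoch0 qpochS qpoch0 !expr0 !mul1r !mulr1 subrr mulr0.
have -> : ZPsi n.+1 m = ZPsi n m
    + \sum_(1 <= j < m.+1) coefPhi m j * (Psi n.+1 (q ^+ j) - Psi n (q ^+ j)).
  by rewrite /ZPsi -big_split /=; apply: eq_bigr => j _; ring.
have -> : ZPhi m n.+1 = ZPhi m n
    + \sum_(1 <= k < m.+1) coefPsi m k * (Phi n.+1 (q ^+ k) - Phi n (q ^+ k)).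
  by rewrite /ZPhi -big_split /=; apply: eq_bigr => k _; ring.
rewrite IH; congr (_ + _).
rewrite (eq_big_nat _ _ (fun j Hj => coefPhi_dPsi n m j (proj1 (andP Hj)))).
rewrite (eq_big_nat _ _ (fun k Hk => coefPsi_dPhi n m k (proj1 (andP Hk)))).
by rewrite -!mulr_sumr sum_dPsi_term.
Qed.

Lemma onemqXqX_neq0 j k : (0 < j)%N -> (forall i, (i <= k)%N -> 1 - q ^+ j * q ^+ i != 0).
Proof. by move=> Hj i _; rewrite -exprD onemqX_neq0 // addn_gt0 Hj. Qed.

Lemma ZPhi_ZPsi n m : ZPhi n m = ZPsi n m.
Proof.
rewrite /ZPhi /ZPsi; transitivity (\sum_(1 <= k < n.+1) \sum_(1 <= j < m.+1)
    coefPsi n k * coefPhi m j / (1 - q ^+ k * q ^+ j)).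
  apply: eq_big_nat => k /andP[Hk _].
  rewrite Phi_sub1; last exact: onemqXqX_neq0.
  rewrite mulr_sumr; apply: eq_bigr => j _.
  by rewrite mulrA.
rewrite exchange_big /=; apply: eq_big_nat => j /andP[Hj _].
rewrite Psi_sub1; last exact: onemqXqX_neq0.
rewrite mulr_sumr; apply: eq_bigr => k _.
rewrite (mulrC (q ^+ j)); field.
by rewrite -exprD onemqX_neq0 // addn_gt0 Hj orbT.
Qed.

Lemma ZPhiC n m : ZPhi n m = ZPhi m n.
Proof. by rewrite ZPhi_ZPsi ZPsi_ZPhi. Qed.

Lemma summand_coefPsi_Phi n m k : (0 < k)%N ->
  P (q / z) k * P z (n - k) * P z m / (P q k * P q (n - k) * P (q ^+ k) m.+1)
    * q ^+ (m * k) * z ^+ k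
  = P z n * P z m / (P q n * P q m) * (coefPsi n k * Phi m (q ^+ k)).
Proof.
move=> Hk; rewrite /coefPsi /Phi -exprM mulnC.
have H1 : P (q ^+ k) m.+1 != 0 by apply: qpochqX_neq0.
by field; neq0.
Qed.

Lemma sum_coefPsi_Phi n m : \sum_(1 <= k < n.+1) coefPsi n k * Phi m (q ^+ k)
  = ZPhi n m + \sum_(1 <= k < n.+1) coefPsi n k / (1 - q ^+ k).
Proof.
rewrite /ZPhi -big_split /=; apply: eq_bigr => k _.
by rewrite mulrBr -mulrA mul1r subrK.
Qed.

Lemma qpoch_sum_identity m n :
  (\sum_(1 <= k < n.+1)
      P (q / z) k * P z (n - k) * P z m / (P q k * P q (n - k) * P (q ^+ k) m.+1)
      * q ^+ (m * k) * z ^+ k)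
  - (\sum_(1 <= k < m.+1)
      P (q / z) k * P z (m - k) * P z n / (P q k * P q (m - k) * P (q ^+ k) n.+1)
      * q ^+ (n * k) * z ^+ k)
  = (1 - z * q^-1) * P z m * P z n / (P q m * P q n)
    * ((\sum_(1 <= k < m.+1) q ^+ k / ((1 - z * q ^+ k.-1) * (1 - q ^+ k)))
       - (\sum_(1 <= k < n.+1) q ^+ k / ((1 - z * q ^+ k.-1) * (1 - q ^+ k)))).
Proof.
rewrite (eq_big_nat _ _ (fun k Hk => summand_coefPsi_Phi n m k (proj1 (andP Hk)))).
rewrite (eq_big_nat _ _ (fun k Hk => summand_coefPsi_Phi m n k (proj1 (andP Hk)))).
rewrite -!mulr_sumr !sum_coefPsi_Phi (ZPhiC n m) !sum_coefPsi_div -/(hsum m) -/(hsum n).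
by field; neq0.
Qed.

End GenericQZ.

Lemma qv_zv_monomial_inj :
  forall a b c d : nat, qv ^+ a * zv ^+ b = qv ^+ c * zv ^+ d -> a = c /\ b = d.
Proof.
move=> a b c d; rewrite /qv /zv -!rmorphXn -!rmorphM => /eqP; rewrite tofrac_eq => /eqP E.
have Ea := congr1 (fun p : {poly {poly rat}} => p`_a) E.
have Ec := congr1 (fun p : {poly {poly rat}} => p`_c) E.
rewrite /= !coefXnM !coefC !ltnn !subnn /= in Ea Ec.
have Hac : a = c.
  case: (ltngtP a c) => // H.
  - move: Ea; rewrite H /= => Ea.
    by have := congr1 (fun p : {poly rat} => size p) Ea; rewrite size_polyXn size_poly0.
  - move: Ec; rewrite H /= => Ec.
    by have := congr1 (fun p : {poly rat} => size p) Ec; rewrite size_polyXn size_poly0.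
subst c; split=> //.
move: Ea; rewrite ltnn subnn /= => Ea.
by have := congr1 (fun p : {poly rat} => size p) Ea; rewrite !size_polyXn => -[].
Qed.

Theorem corollary6p2 (m n : nat) :
  (\sum_(1 <= k < n.+1)
      qpoch (qv / zv) qv k * qpoch zv qv (n - k) * qpoch zv qv m
      / (qpoch qv qv k * qpoch qv qv (n - k) * qpoch (qv ^+ k) qv m.+1)
      * qv ^+ (m * k) * zv ^+ k)
  - (\sum_(1 <= k < m.+1)
      qpoch (qv / zv) qv k * qpoch zv qv (m - k) * qpoch zv qv n
      / (qpoch qv qv k * qpoch qv qv (m - k) * qpoch (qv ^+ k) qv n.+1)
      * qv ^+ (n * k) * zv ^+ k)
  = (1 - zv * qv^-1) * qpoch zv qv m * qpoch zv qv n
      / (qpoch qv qv m * qpoch qv qv n)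
    * ((\sum_(1 <= k < m.+1)
          qv ^+ k / ((1 - zv * qv ^+ k.-1) * (1 - qv ^+ k)))
       - (\sum_(1 <= k < n.+1)
          qv ^+ k / ((1 - zv * qv ^+ k.-1) * (1 - qv ^+ k)))).
Proof. exact: qpoch_sum_identity qv_zv_monomial_inj m n. Qed.
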